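(* Let $k\in\omega\setminus\{0,1\}$, let $A$ be a nontrivial closed class of decision tables from $\mathcal M_k^\infty$, $\psi$ a bounded complexity measure, $T\in A$, $n\in\omega$, and suppose $l_\psi(T,n)>0$. Then there exists a mapping $\nu:E_k^{W(T)}\to\mathcal P(\omega)$ such that the table $T^*=J(\nu,T)$ satisfies $\psi^a(T^* )\le n$ and $\psi^d(T^* )\ge\log_k l_\psi(T,n)$.
   Context: Notation: $\omega=\{0,1,2,\dots\}$; $\mathcal P(\omega)$ is the set of nonempty finite subsets of $\omega$; for $k\in\omega\setminus\{0,1\}$, $E_k=\{0,1,\dots,k-1\}$. $P=\{f_i:i\in\omega\}$ is a set of attributes, $f_i\neq f_j$ for $i\ne j$. Decision tables: $\mathcal M_k^\infty$ is the set of rectangular tables filled with numbers from $E_k$, whose columns are labeled with pairwise different attributes from $P$, whose rows are pairwise different, and each row of which is labeled with a set from $\mathcal P(\omega)$ (its set of decisions). The empty table (no rows) is denoted $\Lambda$ and belongs to $\mathcal M_k^\infty$. For $T\in\mathcal M_k^\infty$: $\Delta(T)$ is the set of rows; $\Pi(T)$ is the intersection of the decision sets of all rows (common decisions); $\mathrm{At}(T)$ is the set of attributes labeling columns; $W(T)=|\mathrm{At}(T)|$. For nonempty $T$, $\Omega_k(T)$ is the set of finite words (including the empty word $\lambda$) over the alphabet $\{(f_i,\delta):f_i\in\mathrm{At}(T),\delta\in E_k\}$; for $\alpha=(f_{i_1},\delta_1)\cdots(f_{i_m},\delta_m)$, $T\alpha$ is the subtable of $T$ consisting of the rows having value $\delta_j$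 in the column $f_{i_j}$ for all $j$, and $T\lambda=T$. Operations: for $D\subseteq\mathrm{At}(T)$, $I(D,T)$ is obtained from $T$ by deleting the columns labeled with attributes from $D$ and, in each group of rows coinciding on the remaining columns, keeping only the first row; $I(\mathrm{At}(T),T)=\Lambda$. For $\nu:E_k^{|\mathrm{At}(T)|}\to\mathcal P(\omega)$, $J(\nu,T)$ is obtained by replacing the decision set of each row $\bar\delta$ by $\nu(\bar\delta)$. $[T]=\{J(\nu,I(D,T)):D\subseteq\mathrm{At}(T),\ \nu:E_k^{|\mathrm{At}(T)\setminus D|}\to\mathcal P(\omega)\}$; for nonempty $A\subseteq\mathcal M_k^\infty$, $[A]=\bigcup_{T\in A}[T]$. $A$ is a closed class if $[A]=A$; nontrivial if it contains a nonempty table. Decision trees: a $k$-decision tree is a finite directed rooted tree with at least two nodes in which the root and the edges leaving the root are unlabeled, each terminal node is labeled with a decision from $\omega$, and each other node is labeled with an attribute from $P$, each edge leaving such a node being labeled with a number from $E_k$. $\mathrm{At}(\Gamma)$ is the set of attributes labeling nodes of $\Gamma$. For a complete path $\tau=v_1,d_1,\dots,v_m,d_m,v_{m+1}$ (from the root to a terminal node), $\pi(\tau)=\lambda$ if $m=1$, and otherwise $\pi(\tau)=(f_{i_2},\delta_2)\cdots(f_{i_m},\delta_m)$ where $v_j$ is labeled $f_{i_j}$ and $d_j$ is labeled $\delta_j$; $T(\tau)=T\pi(\tau)$. For $T\ne\Lambda$, a nondeterministic decision tree for $T$ is a $k$-decision tree $\Gamma$ with $\mathrm{At}(\Gamma)\subseteq\mathrm{At}(T)$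 such that every row of $T$ belongs to $T(\tau)$ for some complete path $\tau$, and for every complete path $\tau$ either $T(\tau)=\Lambda$ or the decision at the terminal node of $\tau$ belongs to $\Pi(T(\tau))$. A deterministic decision tree for $T$ is a nondeterministic decision tree for $T$ in which, additionally, exactly one edge leaves the root and the edges leaving any node that is neither the root nor terminal are labeled with pairwise different numbers. Complexity measures: a partially bounded complexity measure is a function $\psi:P^*\to\omega$ on finite words over $P$ such that for all words $\alpha_1,\alpha_2$: $\psi(\alpha_1)=0$ iff $\alpha_1=\lambda$; $\psi(\alpha_1)$ is invariant under permutation of letters; $\psi(\alpha_1)\le\psi(\alpha_1\alpha_2)$; $\psi(\alpha_1\alpha_2)\le\psi(\alpha_1)+\psi(\alpha_2)$. It is bounded if in addition $\psi(\alpha)\ge|\alpha|$ for all $\alpha$. $\psi$ is extended to words $(f_{i_1},\delta_1)\cdots(f_{i_m},\delta_m)$ by $\psi(f_{i_1}\cdots f_{i_m})$ ($\psi(\lambda)=0$). For a $k$-decision tree $\Gamma$, $\psi(\Gamma)=\max_\tau\psi(\pi(\tau))$ over complete paths. For $T\ne\Lambda$, $\psi^d(T)$ (resp. $\psi^a(T)$) is the minimum of $\psi(\Gamma)$ over deterministic (resp. nondeterministic) decision trees $\Gamma$ for $T$; $\psi^d(\Lambda)=\psi^a(\Lambda)=0$. Covers: for $T\ne\Lambda$ and $n\in\omega$, $\Omega_k^n(T)=\{\alpha\in\Omega_k(T):\psi(\alpha)\le n\}$. A finite set $U\subseteq\Omega_k^n(T)$ is a $(\psi,n)$-cover of $T$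 if $\bigcup_{\alpha\in U}\Delta(T\alpha)=\Delta(T)$; it is irreducible if no proper subset of $U$ is a $(\psi,n)$-cover of $T$. $l_\psi(T,n)$ is the maximum cardinality of an irreducible $(\psi,n)$-cover of $T$; $l_\psi(\Lambda,n)=0$. *)

From Stdlib Require Import Reals ClassicalDescription.
From mathcomp Require Import all_boot.

Set Implicit Arguments.
Unset Strict Implicit.
Unset Printing Implicit Defensive.

(* Attributes f_i are represented by their index i : nat.              *)
(* A finite nonempty decision set (element of P(omega)) is represented *)
(* canonically by a nonempty strictly increasing seq nat.             *)
(* A decision table: list of column attributes, list of rows; a row is *)
(* (tuple of values in column order, decision set).                    *)

Record table := Table { cols : seq nat; rows : seq (seq nat * seq nat) }.

Definition Lam : table := Table [::] [::].

Definition is_dset (s : seq nat) : bool := (s != [::]) && sorted ltn s.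

Definition wf_table (k : nat) (T : table) : bool :=
  [&& uniq (cols T),
      all (fun r => [&& size r.1 == size (cols T), all (fun x => x < k) r.1
                      & is_dset r.2]) (rows T),
      uniq (map fst (rows T))
    & (rows T == [::]) == (cols T == [::])].

(* nu : E_k^m -> P(omega) (only its values on E_k^m matter) *)
Definition valid_nu (k m : nat) (nu : seq nat -> seq nat) : Prop :=
  forall v : seq nat, size v = m -> all (fun x => x < k) v -> is_dset (nu v).

Definition Jop (nu : seq nat -> seq nat) (T : table) : table :=
  Table (cols T) [seq (r.1, nu r.1) | r <- rows T].

Definition proj (D : seq nat) (cs : seq nat) (v : seq nat) : seq nat :=
  [seq x.1 | x <- zip v cs & x.2 \notin D].

Fixpoint keep_first (D cs : seq nat) (seen : seq (seq nat))
    (rs : seq (seq nat * seq nat)) : seq (seq nat * seq nat) :=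
  match rs with
  | [::] => [::]
  | r :: rs' =>
      if proj D cs r.1 \in seen then keep_first D cs seen rs'
      else (proj D cs r.1, r.2) :: keep_first D cs (proj D cs r.1 :: seen) rs'
  end.

Definition Iop (D : seq nat) (T : table) : table :=
  if all (fun f => f \in D) (cols T) then Lam
  else Table [seq f <- cols T | f \notin D] (keep_first D (cols T) [::] (rows T)).

Definition in_closure (k : nat) (T T' : table) : Prop :=
  exists (D : seq nat) (nu : seq nat -> seq nat),
    {subset D <= cols T} /\
    valid_nu k (size [seq f <- cols T | f \notin D]) nu /\
    T' = Jop nu (Iop D T).

Definition closed_class (k : nat) (A : table -> Prop) : Prop :=
  (forall T, A T -> wf_table k T) /\
  (exists T, A T) /\
  (forall T', (exists T, A T /\ in_closure k T T') <-> A T').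

Definition nontrivial (A : table -> Prop) : Prop :=
  exists T, A T /\ rows T != [::].

(* Words over {(f_i, delta)} *)
Definition word := seq (nat * nat).

Definition in_Omega (k : nat) (T : table) (a : word) : bool :=
  all (fun p => (p.1 \in cols T) && (p.2 < k)) a.

Definition row_matches (T : table) (v : seq nat) (a : word) : bool :=
  all (fun p => nth 0 v (index p.1 (cols T)) == p.2) a.

Definition subtable (T : table) (a : word) : table :=
  let rs := [seq r <- rows T | row_matches T r.1 a] in
  if rs == [::] then Lam else Table (cols T) rs.

Definition in_Pi (T : table) (d : nat) : bool :=
  all (fun r => d \in r.2) (rows T).

Definition partially_bounded_measure (psi : seq nat -> nat) : Prop :=
  (forall a, psi a = 0 <-> a = [::]) /\
  (forall a b, perm_eq a b -> psi a = psi b) /\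
  (forall a b, psi a <= psi (a ++ b)) /\
  (forall a b, psi (a ++ b) <= psi a + psi b).

Definition bounded_measure (psi : seq nat -> nat) : Prop :=
  partially_bounded_measure psi /\ (forall a, size a <= psi a).

Definition psiw (psi : seq nat -> nat) (a : word) : nat := psi (map fst a).

(* k-decision trees. The root is implicit: a tree is the nonempty list *)
(* of subtrees hanging from the (unlabeled) root by unlabeled edges.   *)
(* Node f ch : node labeled with attribute f, with edges (delta, t).   *)
Inductive dnode := Leaf of nat | Node of nat & seq (nat * dnode).

Definition dtree := seq dnode.

Fixpoint node_ok (k : nat) (t : dnode) : bool :=
  match t with
  | Leaf _ => true
  | Node _ ch => ~~ nilp ch && all (fun p => (p.1 < k) && node_ok k p.2) ch
  end.

Fixpoint node_det (t : dnode) : bool :=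
  match t with
  | Leaf _ => true
  | Node _ ch => uniq (map fst ch) && all (fun p => node_det p.2) ch
  end.

Fixpoint node_attrs (t : dnode) : seq nat :=
  match t with
  | Leaf _ => [::]
  | Node f ch => f :: flatten (map (fun p => node_attrs p.2) ch)
  end.

(* complete paths starting below the root: (pi(tau), terminal decision) *)
Fixpoint node_paths (t : dnode) : seq (word * nat) :=
  match t with
  | Leaf d => [:: ([::], d)]
  | Node f ch =>
      flatten (map (fun p => [seq ((f, p.1) :: q.1, q.2) | q <- node_paths p.2]) ch)
  end.

Definition k_tree (k : nat) (G : dtree) : bool := ~~ nilp G && all (node_ok k) G.
Definition tree_attrs (G : dtree) : seq nat := flatten (map node_attrs G).
Definition tree_paths (G : dtree) : seq (word * nat) := flatten (map node_paths G).

Definition tree_cost (psi : seq nat -> nat) (G : dtree) : nat :=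
  \max_(tau <- tree_paths G) psiw psi tau.1.

Definition nondet_tree (k : nat) (T : table) (G : dtree) : Prop :=
  [/\ k_tree k G,
      {subset tree_attrs G <= cols T},
      (forall r, r \in rows T -> exists2 tau, tau \in tree_paths G & row_matches T r.1 tau.1)
    & (forall tau, tau \in tree_paths G ->
         subtable T tau.1 = Lam \/ in_Pi (subtable T tau.1) tau.2)].

Definition det_tree (k : nat) (T : table) (G : dtree) : Prop :=
  [/\ nondet_tree k T G, size G = 1 & all node_det G].

(* minimum / maximum of a set of naturals (0 if it does not exist)     *)
Lemma natmin_ex (P : nat -> Prop) :
  (exists m, P m) -> exists m, is_left (excluded_middle_informative (P m)).
Proof.
case=> m Pm; exists m; by case: excluded_middle_informative.
Qed.

Definition natmin (P : nat -> Prop) : nat :=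
  match excluded_middle_informative (exists m, P m) with
  | left h => ex_minn (natmin_ex h)
  | right _ => 0
  end.

Definition natmax (P : nat -> Prop) : nat :=
  natmin (fun m => P m /\ forall x, P x -> x <= m).

Definition psi_d (k : nat) (psi : seq nat -> nat) (T : table) : nat :=
  if rows T == [::] then 0
  else natmin (fun m => exists G, det_tree k T G /\ tree_cost psi G = m).

Definition psi_a (k : nat) (psi : seq nat -> nat) (T : table) : nat :=
  if rows T == [::] then 0
  else natmin (fun m => exists G, nondet_tree k T G /\ tree_cost psi G = m).

Definition is_cover (k : nat) (psi : seq nat -> nat) (T : table) (n : nat)
    (U : seq word) : Prop :=
  [/\ uniq U,
      all (fun a => in_Omega k T a && (psiw psi a <= n)) U
    & forall r, r \in rows T -> has (row_matches T r.1) U].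

Definition irreducible_cover (k : nat) (psi : seq nat -> nat) (T : table) (n : nat)
    (U : seq word) : Prop :=
  is_cover k psi T n U /\
  (forall U', uniq U' -> {subset U' <= U} -> size U' < size U -> ~ is_cover k psi T n U').

Definition l_psi (k : nat) (psi : seq nat -> nat) (T : table) (n : nat) : nat :=
  if rows T == [::] then 0
  else natmax (fun m => exists U, irreducible_cover k psi T n U /\ size U = m).

Definition logk (k x : nat) : R := Rdiv (ln (INR x)) (ln (INR k)).

From Stdlib Require Import Reals ClassicalDescription Classical Lia Lra.
From mathcomp Require Import all_boot.
Set Implicit Arguments.
Unset Strict Implicit.
Unset Printing Implicit Defensive.

(* Take an irreducible (psi, n)-cover U of T of maximal size l, and let each row of
   T* = J(nu, T) answer the positions in U of the words it matches.  Following each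
   word of U along its own branch and answering its position gives a nondeterministic
   tree for T* of complexity at most n.  By irreducibility every word a of U has a
   row matched by a alone; in any decision tree for T* that row ends on a path whose
   answer must be the position of a, so the tree has at least l complete paths.  A
   deterministic k-tree of complexity d has at most k^d complete paths because psi
   bounds the length of a path, hence l <= k^d with d = psi^d(J(nu, T)). *)

Lemma InP (T : eqType) (x : T) s : reflect (List.In x s) (x \in s).
Proof.
elim: s => [|y s IH] /=; first by right.
rewrite inE; apply: (iffP orP) => [[/eqP->|/IH]|[->|/IH]]; by [left | right].
Qed.

Lemma mem_flatten_map_In (A : Type) (B : eqType) (F : A -> seq B) (s : seq A) x :
  x \in flatten (map F s) <-> exists2 p, List.In p s & x \in F p.
Proof.
elim: s => [|p s IH] /=; first by split=> // [[]].
rewrite mem_cat; split.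
  by case/orP=> [xp|/IH [q qs xq]]; [exists p; [left|] | exists q; [right|]].
case=> q [<-|qs] xq; first by rewrite xq.
by apply/orP; right; apply/IH; exists q.
Qed.

Lemma all_In (A : Type) (a : pred A) s p : all a s -> List.In p s -> a p.
Proof. by elim: s => //= q s IH /andP[aq /IH as_] [<-|/as_]. Qed.

Lemma size_flatten_map_le (A B : Type) (F : A -> seq B) (s : seq A) b :
  (forall p, List.In p s -> size (F p) <= b) -> size (flatten (map F s)) <= size s * b.
Proof.
elim: s => //= p s IH Fb; rewrite size_cat mulSn leq_add ?Fb //; first by left.
by apply: IH => q qs; apply: Fb; right.
Qed.

Lemma natminP (P : nat -> Prop) :
  (exists m, P m) -> P (natmin P) /\ forall m, P m -> natmin P <= m.
Proof.
move=> exP; rewrite /natmin; case: excluded_middle_informative => // exP'.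
case: ex_minnP => m Pm minm; split.
  by move: Pm; case: excluded_middle_informative.
by move=> x Px; apply: minm; case: excluded_middle_informative.
Qed.

Lemma natmin_gt0 (P : nat -> Prop) : 0 < natmin P -> P (natmin P).
Proof.
move=> pos; suff /natminP [] : exists m, P m by [].
apply: NNPP => noP; move: pos; rewrite /natmin.
by destruct excluded_middle_informative.
Qed.

Lemma natmax_gt0 (P : nat -> Prop) : 0 < natmax P -> P (natmax P).
Proof. by move/natmin_gt0 => []. Qed.

Lemma dnode_ind_In (P : dnode -> Prop) :
  (forall d, P (Leaf d)) ->
  (forall f ch, (forall p, List.In p ch -> P p.2) -> P (Node f ch)) ->
  forall t, P t.
Proof.
move=> HL HN; fix IH 1; case=> [d|f ch]; first exact: HL.
apply: HN; elim: ch => [|[lab t] ch IHch] q /= [].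
- by move=> <-; apply: IH.
- exact: IHch.
Qed.

Lemma size_node_paths_det k t d :
  0 < k -> node_ok k t -> node_det t ->
  (forall tau, tau \in node_paths t -> size tau.1 <= d) -> size (node_paths t) <= k ^ d.
Proof.
move=> k0; elim/dnode_ind_In: t d => [x|f ch IH] d /=; first by rewrite expn_gt0 k0.
case/andP=> _ okch /andP[uch detch] short.
have labels_lt_k : all (fun x => x < k) (map fst ch).
  by rewrite all_map; apply: sub_all okch => p /andP[].
have size_ch : size ch <= k.
  rewrite -(size_map fst) -(size_iota 0 k); apply: uniq_leq_size => // x.
  by move/(allP labels_lt_k); rewrite mem_iota.
case: d short => [|d] short.
  case E: (flatten _) => [|tau s] //.
  have : tau \in flatten [seq [seq ((f, p.1) :: q.1, q.2) | q <- node_paths p.2] | p <- ch].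
    by rewrite E mem_head.
  case/mem_flatten_map_In => p _ /mapP [q _ Eq].
  by move: (short tau); rewrite E mem_head Eq => /(_ isT).
apply: (@leq_trans (size ch * k ^ d)); last by rewrite expnS leq_mul2r size_ch orbT.
apply: size_flatten_map_le => p pch; rewrite size_map; apply: IH => //.
- by case/andP: (all_In okch pch).
- exact: (all_In detch pch).
- move=> tau taup; have := short ((f, p.1) :: tau.1, tau.2).
  by rewrite ltnS; apply; apply/mem_flatten_map_In; exists p => //; apply: map_f.
Qed.

Lemma size_tree_paths_det k psi T G :
  0 < k -> (forall a, size a <= psi a) -> det_tree k T G ->
  size (tree_paths G) <= k ^ tree_cost psi G.
Proof.
move=> k0 psi_ge_size [[kG _ _ _] sizeG detG].
case: G sizeG kG detG => [|t []] //= _ /andP[_ /andP[okt _]] /andP[dett _].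
rewrite /tree_paths /tree_cost /= cats0; apply: size_node_paths_det => // tau taut.
rewrite -(size_map fst); apply: leq_trans (psi_ge_size _) _.
by apply: (leq_bigmax_seq tau); rewrite /tree_paths /= ?cats0.
Qed.

Lemma subtable_decisionP X a d :
  subtable X a = Lam \/ in_Pi (subtable X a) d <->
  (forall r, r \in rows X -> row_matches X r.1 a -> d \in r.2).
Proof.
rewrite /subtable; split=> [|all_d].
  move=> Xa r rX rma; have rf : r \in [seq r <- rows X | row_matches X r.1 a].
    by rewrite mem_filter rma.
  case: ifP Xa => [/eqP E|_ [[_ E]|/allP/(_ _ rf)//]]; by rewrite E in rf.
case: ifP => _; [by left | right].
by apply/allP => r /=; rewrite mem_filter => /andP[rma rX]; apply: all_d.
Qed.

Lemma row_matches_zip T v : uniq (cols T) -> size v = size (cols T) ->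
  row_matches T v (zip (cols T) v).
Proof.
move=> ucols sv; apply/(all_nthP (0, 0)) => i; rewrite size_zip sv minnn => ilt.
by rewrite nth_zip //= index_uniq.
Qed.

Lemma row_matches_zip_eq T v w : uniq (cols T) ->
  size v = size (cols T) -> size w = size (cols T) ->
  row_matches T v (zip (cols T) w) -> v = w.
Proof.
move=> ucols sv sw /(all_nthP (0, 0)) vw; apply: (@eq_from_nth _ 0); first by rewrite sv sw.
move=> i; rewrite sv => ilt; move: (vw i); rewrite size_zip sw minnn nth_zip //=.
by rewrite index_uniq // => /(_ ilt)/eqP.
Qed.

Fixpoint full_node (k : nat) (cs : seq nat) (g : seq nat -> nat) : dnode :=
  match cs with
  | [::] => Leaf (g [::])
  | c :: cs' => Node c [seq (x, full_node k cs' (fun v => g (x :: v))) | x <- iota 0 k]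
  end.

Lemma full_node_ok k cs g : 0 < k -> node_ok k (full_node k cs g).
Proof.
move=> k0; elim: cs g => //= c cs IH g; rewrite /nilp size_map size_iota -lt0n k0 /=.
by rewrite all_map; apply/allP => x; rewrite mem_iota /= IH andbT.
Qed.

Lemma full_node_det k cs g : node_det (full_node k cs g).
Proof.
elim: cs g => //= c cs IH g; rewrite -map_comp map_id_in //.
by rewrite iota_uniq all_map; apply/allP => x _; apply: IH.
Qed.

Lemma full_node_attrs k cs g : {subset node_attrs (full_node k cs g) <= cs}.
Proof.
elim: cs g => //= c cs IH g x; rewrite inE => /orP[/eqP->|]; first by rewrite mem_head.
case/mem_flatten_map_In => _ /List.in_map_iff [y [<- _]] /IH xcs.
by rewrite inE xcs orbT.
Qed.

Lemma full_node_paths k cs g tau : tau \in node_paths (full_node k cs g) ->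
  exists2 w, size w = size cs & tau = (zip cs w, g w).
Proof.
elim: cs g tau => [|c cs IH] g tau /=; first by rewrite inE => /eqP ->; exists [::].
case/mem_flatten_map_In => _ /List.in_map_iff [x [<- _]] /mapP [q qin ->].
by have [w sw ->] := IH _ _ qin; exists (x :: w); rewrite /= ?sw.
Qed.

Lemma mem_full_node_paths k cs g w : size w = size cs -> all (fun x => x < k) w ->
  (zip cs w, g w) \in node_paths (full_node k cs g).
Proof.
elim: cs g w => [|c cs IH] g [|x w] //=; first by rewrite mem_head.
case=> sw /andP[xk wk]; apply/mem_flatten_map_In.
exists (x, full_node k cs (fun v => g (x :: v))).
  by apply/List.in_map_iff; exists x; split => //; apply/InP; rewrite mem_iota.
exact: (map_f (fun q => ((c, x) :: q.1, q.2)) (IH _ _ sw wk)).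
Qed.

Lemma det_tree_full_Jop k nu T :
  0 < k -> wf_table k T -> valid_nu k (size (cols T)) nu ->
  det_tree k (Jop nu T) [:: full_node k (cols T) (fun v => head 0 (nu v))].
Proof.
move=> k0 /and4P[ucols rows_ok _ _] nu_ok.
have row_ok r : r \in rows T -> size r.1 = size (cols T) /\ all (fun x => x < k) r.1.
  by move/(allP rows_ok) => /and3P[/eqP ? ? _].
split; [split | by [] | by rewrite /= full_node_det];
  rewrite /k_tree /tree_attrs /tree_paths /= ?cats0.
- by rewrite full_node_ok.
- exact: full_node_attrs.
- move=> _ /mapP [r rT ->]; have [sr kr] := row_ok r rT.
  exists (zip (cols T) r.1, head 0 (nu r.1)); first exact: mem_full_node_paths.
  exact: row_matches_zip.
- move=> _ /full_node_paths [w sw ->] /=.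
  apply/subtable_decisionP => _ /mapP [r rT ->] /= rmw.
  have [sr kr] := row_ok r rT; have <- := row_matches_zip_eq ucols sr sw rmw.
  by have /andP[] := nu_ok _ sr kr; case: (nu r.1) => //= x s _ _; rewrite mem_head.
Qed.

Definition chain (a : word) (d : nat) : dnode :=
  foldr (fun p t => Node p.1 [:: (p.2, t)]) (Leaf d) a.

Definition chain_forest (U : seq word) : dtree := [seq chain a (index a U) | a <- U].

Lemma chain_paths a d : node_paths (chain a d) = [:: (a, d)].
Proof. by elim: a => //= -[f x] a ->. Qed.

Lemma chain_attrs a d : node_attrs (chain a d) = map fst a.
Proof. by elim: a => //= p a ->; rewrite cats0. Qed.

Lemma chain_ok k a d : all (fun p => p.2 < k) a -> node_ok k (chain a d).
Proof. by elim: a => //= p a IH /andP[-> /IH ->]. Qed.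

Lemma chains_paths (s : seq word) (h : word -> nat) :
  tree_paths [seq chain a (h a) | a <- s] = [seq (a, h a) | a <- s].
Proof. by elim: s => //= a s; rewrite /tree_paths /= chain_paths => ->. Qed.

Lemma chains_attrs (s : seq word) (h : word -> nat) :
  tree_attrs [seq chain a (h a) | a <- s] = flatten [seq map fst a | a <- s].
Proof. by elim: s => //= a s; rewrite /tree_attrs /= chain_attrs => ->. Qed.

Definition matched_positions (T : table) (U : seq word) (v : seq nat) : seq nat :=
  [seq i <- iota 0 (size U) | row_matches T v (nth [::] U i)].

Definition cover_decisions (T : table) (U : seq word) (v : seq nat) : seq nat :=
  if matched_positions T U v is [::] then [:: 0] else matched_positions T U v.

Definition only_match (T : table) (U : seq word) (a : word) (v : seq nat) : bool :=
  row_matches T v a && all (fun b => (b == a) || ~~ row_matches T v b) U.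

Lemma mem_matched_positions T U v i :
  (i \in matched_positions T U v) = (i < size U) && row_matches T v (nth [::] U i).
Proof. by rewrite mem_filter mem_iota andbC. Qed.

Lemma index_matched_positions T U v a :
  a \in U -> row_matches T v a -> index a U \in matched_positions T U v.
Proof. by move=> aU rma; rewrite mem_matched_positions index_mem aU nth_index. Qed.

Lemma cover_decisions_matched T U v a :
  a \in U -> row_matches T v a -> cover_decisions T U v = matched_positions T U v.
Proof.
move=> aU /(index_matched_positions aU); rewrite /cover_decisions.
by case: matched_positions.
Qed.

Lemma cover_decisions_dset T U v : is_dset (cover_decisions T U v).
Proof.
rewrite /cover_decisions /is_dset; case E: matched_positions => [|i s] //; rewrite andTb -E.
by apply: sorted_filter; [exact: ltn_trans | exact: iota_ltn_sorted].
Qed.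

Lemma mem_cover_decisions T U v a :
  a \in U -> row_matches T v a -> index a U \in cover_decisions T U v.
Proof.
by move=> aU rma; rewrite (cover_decisions_matched aU rma) index_matched_positions.
Qed.

Lemma cover_decisions_only_match T U v a d :
  a \in U -> only_match T U a v -> d \in cover_decisions T U v -> nth [::] U d = a.
Proof.
move=> aU /andP[rma /allP only_a].
rewrite (cover_decisions_matched aU rma) mem_matched_positions => /andP[dU rmd].
by have := only_a _ (mem_nth [::] dU); rewrite rmd orbF => /eqP.
Qed.

Lemma irreducible_cover_only_match k psi T n U a :
  irreducible_cover k psi T n U -> a \in U -> exists2 r, r \in rows T & only_match T U a r.1.
Proof.
move=> [[uU Uok Ucov] Umin] aU; apply/hasP/negPn/negP => no_only.
have sz : size (rem a U) < size U by rewrite size_rem // ltn_predL; case: (U) aU.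
apply: (Umin _ (rem_uniq a uU) (fun x => @mem_rem _ a U x) sz); split.
- exact: rem_uniq.
- by apply/allP => b /mem_rem /(allP Uok).
move=> r rT; have /hasP [b bU rmb] := Ucov r rT; apply/hasP.
case: (eqVneq b a) => [eba|nba]; last by exists b; rewrite // (mem_rem_uniq _ uU) inE nba.
have : ~~ only_match T U a r.1 by apply: contra no_only => h; apply/hasP; exists r.
rewrite /only_match -eba rmb /= => /allPn [b' b'U].
by rewrite negb_or negbK => /andP [nb' rmb']; exists b'; rewrite // (mem_rem_uniq _ uU) inE nb'.
Qed.

Lemma irreducible_cover_le_paths k psi T n U G :
  irreducible_cover k psi T n U -> nondet_tree k (Jop (cover_decisions T U) T) G ->
  size U <= size (tree_paths G).
Proof.
move=> irrU [_ _ Gcov Gdec]; have [[uU _ _] _] := irrU.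
rewrite -(size_map (fun tau => nth [::] U tau.2)); apply: uniq_leq_size => // a aU.
have [r rT only_a] := irreducible_cover_only_match irrU aU.
have rJ : (r.1, cover_decisions T U r.1) \in rows (Jop (cover_decisions T U) T).
  exact: (map_f (fun r => (r.1, _ r.1))).
have [tau tauG rm_tau] := Gcov _ rJ.
have /subtable_decisionP /(_ _ rJ rm_tau) dec_tau := Gdec _ tauG.
by apply/mapP; exists tau; rewrite // (cover_decisions_only_match aU only_a dec_tau).
Qed.

Lemma chain_forest_cost k psi T n U : is_cover k psi T n U -> tree_cost psi (chain_forest U) <= n.
Proof.
move=> [_ /allP Uok _]; rewrite /tree_cost chains_paths.
apply/bigmax_leqP_seq => _ /mapP [a aU ->] _.
by case/andP: (Uok a aU).
Qed.

Lemma chain_forest_nondet k psi T n U : U != [::] -> is_cover k psi T n U ->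
  nondet_tree k (Jop (cover_decisions T U) T) (chain_forest U).
Proof.
move=> U0 [_ /allP Uok Ucov]; split.
- rewrite /k_tree /chain_forest /nilp size_map size_eq0 U0 all_map.
  apply/allP => a /Uok /andP [/allP in_om _]; apply: chain_ok.
  by apply/allP => p /in_om /andP[].
- rewrite chains_attrs => f /flattenP [_ /mapP [a aU ->] /mapP [p pa ->]].
  by have /andP [/allP /(_ p pa) /andP[]] := Uok a aU.
- move=> _ /mapP [r rT ->]; have /hasP [a aU rma] := Ucov r rT.
  by exists (a, index a U); rewrite // chains_paths map_f.
- move=> tau; rewrite chains_paths => /mapP [a aU ->] /=.
  apply/subtable_decisionP => _ /mapP [r _ ->]; exact: mem_cover_decisions.
Qed.

Lemma psi_a_le k psi T G : nondet_tree k T G -> psi_a k psi T <= tree_cost psi G.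
Proof.
rewrite /psi_a => ndG; case: ifP => // _.
have exG : exists m, exists G', nondet_tree k T G' /\ tree_cost psi G' = m.
  by exists (tree_cost psi G), G.
by have [_ ->] := natminP exG; last exists G.
Qed.

Lemma psi_d_witness k psi T G : rows T != [::] -> det_tree k T G ->
  exists2 G', det_tree k T G' & psi_d k psi T = tree_cost psi G'.
Proof.
move=> /negbTE rT dG; rewrite /psi_d rT.
have exG : exists m, exists G', det_tree k T G' /\ tree_cost psi G' = m.
  by exists (tree_cost psi G), G.
by have [[G' [dG' <-]] _] := natminP exG; exists G'.
Qed.

Lemma l_psi_cover k psi T n : 0 < l_psi k psi T n ->
  exists2 U, irreducible_cover k psi T n U & size U = l_psi k psi T n.
Proof.
rewrite /l_psi; case: ifP => // _ /natmax_gt0 [U [irrU <-]].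
by exists U.
Qed.

Lemma INR_expn k c : INR (k ^ c) = Rpow_def.pow (INR k) c.
Proof. by elim: c => //= c IH; rewrite expnS mult_INR IH. Qed.

Lemma logk_le_expn k l c : 2 <= k -> 0 < l -> l <= k ^ c -> Rle (logk k l) (INR c).
Proof.
move=> /leP k2 /leP l0 /leP lk; rewrite /logk.
have k1 : Rlt 1 (INR k) by apply: lt_1_INR; lia.
have lnk : Rlt 0 (ln (INR k)) by rewrite -ln_1; apply: ln_increasing; lra.
apply: (Rmult_le_reg_r (ln (INR k))) => //.
rewrite /Rdiv Rmult_assoc Rinv_l ?Rmult_1_r; last by lra.
rewrite -ln_pow; last by lra.
have lp : Rlt 0 (INR l) by apply: lt_0_INR.
have /Rle_lt_or_eq_dec [lt_lk|->] : Rle (INR l) (INR k ^ c).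
  by rewrite -INR_expn; apply: le_INR.
- by apply/Rlt_le/ln_increasing.
- exact: Rle_refl.
Qed.

Theorem lemma4 (k : nat) (A : table -> Prop) (psi : seq nat -> nat)
    (T : table) (n : nat) :
  2 <= k ->
  closed_class k A ->
  nontrivial A ->
  bounded_measure psi ->
  A T ->
  0 < l_psi k psi T n ->
  exists nu : seq nat -> seq nat,
    valid_nu k (size (cols T)) nu /\
    psi_a k psi (Jop nu T) <= n /\
    Rle (logk k (l_psi k psi T n)) (INR (psi_d k psi (Jop nu T))).
Proof.
move=> k2 [wfA _] _ [_ psi_ge_size] AT lpos.
have k0 : 0 < k := ltnW k2.
have rT : rows T != [::] by move: lpos; rewrite /l_psi; case: ifP.
have [U irrU sizeU] := l_psi_cover lpos; rewrite -sizeU in lpos *.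
have [coverU _] := irrU.
have U0 : U != [::] by rewrite -size_eq0 -lt0n.
set nu := cover_decisions T U.
have nu_ok : valid_nu k (size (cols T)) nu by move=> v _ _; apply: cover_decisions_dset.
have rJ : rows (Jop nu T) != [::] by rewrite /= -size_eq0 size_map size_eq0.
exists nu; split=> //; split.
  exact: leq_trans (psi_a_le psi (chain_forest_nondet U0 coverU)) (chain_forest_cost coverU).
have [G detG ->] := psi_d_witness psi rJ (det_tree_full_Jop k0 (wfA T AT) nu_ok).
apply: logk_le_expn => //; apply: leq_trans (size_tree_paths_det k0 psi_ge_size detG).
by case: detG => ndG _ _; apply: irreducible_cover_le_paths irrU ndG.
Qed.
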